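(* Let $\tau:\mathcal A\to\mathcal A^+$ be a substitution satisfying the standing assumptions below, with a generating fixed point $u=u_0u_1u_2\ldots$. For a letter $a\in\mathcal A$, the sequence $au=au_0u_1u_2\ldots$ belongs to $X_\tau$ if and only if $a$ is part of a suffix cycle $a_1,a_2,\ldots,a_m$ such that $a_iu_0\in\mathcal L_\tau$ for some $i\in\{1,\ldots,m\}$.
   Context: $\mathcal A$ is a finite alphabet, $\mathcal A^+$ the finite words over it. A substitution $\tau$ is extended to words and one-sided sequences by concatenation. The language $\mathcal L_\tau$ is the set of all finite subwords of the words $\tau^n(a)$, $n\ge1$, $a\in\mathcal A$. A fixed point is $u\in\mathcal A^{\mathbb N}$ with $\tau(u)=u$; it is generating if its set of finite subwords is $\mathcal L_\tau$. $\sigma$ is the left shift and $X_\tau$ is the closure of $\{\sigma^n(u):n\ge0\}$ in $\mathcal A^{\mathbb N}$. Letters $a_1,\ldots,a_m$ form a suffix cycle if the last letter of $\tau(a_i)$ is $a_{i+1}$ for $1\le i<m$ and the last letter of $\tau(a_m)$ is $a_1$; $a$ is part of it if $a\in\{a_1,\ldots,a_m\}$. Standing assumptions: $\tau$ is primitive, $X_\tau$ is aperiodic (infinite), $\tau$ is unilaterally recognizable (with $E=\{0\}\cup\{|\tau(u_0\cdots u_{p-1})|:p>0\}$ there is $L$ such that $u_{[i,i+L-1]}=u_{[j,j+L-1]}$ and $i\in E$ imply $j\in E$), and every power $\tau^n$ is injective on letters. *)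

From mathcomp Require Import ssreflect ssrfun ssrbool eqtype ssrnat seq path choice fintype.
Set Implicit Arguments. Unset Strict Implicit. Unset Printing Implicit Defensive.

Section Subst.
Variable A : finType.
Variable tau : A -> seq A.

Definition subw (w : seq A) : seq A := flatten (map tau w).

Definition subst_pow (n : nat) (a : A) : seq A := iter n subw [:: a].

Definition nonerasing : Prop := forall a, 0 < size (tau a).

Definition prefix (u : nat -> A) (n : nat) : seq A := mkseq u n.

Definition factor (u : nat -> A) (i n : nat) : seq A := mkseq (fun k => u (i + k)) n.

(* tau extended to one-sided sequences by concatenation:
   letter i of tau(u0 u1 ...) is letter i of tau(u_0 ... u_i)
   (which has length >= i+1 when tau is nonerasing) *)
Definition subst_inf (u : nat -> A) : nat -> A :=
  fun i => nth (u 0) (subw (prefix u i.+1)) i.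

Definition inL (w : seq A) : Prop :=
  exists n, exists a, 0 < n /\ infix w (subst_pow n a).

Definition fixed_point (u : nat -> A) : Prop := forall i, subst_inf u i = u i.

Definition generating (u : nat -> A) : Prop :=
  fixed_point u /\ forall w, (exists i, w = factor u i (size w)) <-> inL w.

(* x belongs to X_tau = closure of {sigma^n u : n >= 0} in A^N (product of
   discrete topologies): every cylinder neighbourhood of x (fixing the first
   N coordinates) meets the orbit. *)
Definition inX (u x : nat -> A) : Prop :=
  forall N, exists n, forall i, i < N -> u (n + i) = x i.

Definition X_infinite (u : nat -> A) : Prop :=
  ~ exists s : seq (nat -> A),
      forall x, inX u x -> exists2 j, j < size s & forall i, x i = nth x s j i.

Definition primitive : Prop :=
  exists n, 0 < n /\ forall a b, b \in subst_pow n a.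

Definition inE (u : nat -> A) (k : nat) : Prop :=
  exists p, k = size (subw (prefix u p)).

Definition unil_recognizable (u : nat -> A) : Prop :=
  exists L, forall i j, factor u i L = factor u j L -> inE u i -> inE u j.

Definition powers_injective : Prop :=
  forall n, 0 < n -> injective (subst_pow n).

Definition last_letter (a : A) : A := last a (tau a).

Definition suffix_cycle (s : seq A) : Prop :=
  s != [::] /\ cycle (fun x y => last_letter x == y) s.

End Subst.

Definition cons_seq (A : Type) (a : A) (u : nat -> A) : nat -> A :=
  fun n => if n is k.+1 then u k else a.

(* If a u lies in X_tau, take an occurrence of a u_0 ... u_N in u.  The position
   right after a is followed by a long prefix of u, so unilateral recognizability
   makes it a cutting point, and the block after it desubstitutes to the image of
   a prefix of u, which by injectivity of tau is that very prefix; the letter c cut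
   just before has tau(c) ending in a.  Having finitely many letters, one c works
   for every N, so c u is in X_tau as well.  Thus every such a has a preimage of
   the same kind under the last-letter map, and finiteness makes a periodic: a lies
   on a suffix cycle, and a u_0 occurs in u.
   Conversely, if b u_0 is in L_tau with b on the cycle of a, then tau^K(b u_0)
   ends with last^K(b) followed by the prefix tau^K(u_0) of u, which is longer than
   K because |tau(u_0)| > 1 (otherwise u would be constant); choosing K >= N with
   last^K(b) = a exhibits a u_0 ... u_N in u. *)

From mathcomp Require Import ssreflect ssrfun ssrbool eqtype ssrnat seq path fintype fingraph.
(* After seq, so that [prefix] is the prefix of a sequence, not [seq.prefix]. *)
From Stdlib Require Import Classical ClassicalEpsilon.

Set Implicit Arguments. Unset Strict Implicit. Unset Printing Implicit Defensive.

Lemma exists_forall_antitone (T : finType) (P : T -> nat -> Prop) :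
  (forall c M N, N <= M -> P c M -> P c N) ->
  (forall M, exists c, P c M) -> exists c, forall M, P c M.
Proof.
move=> P_anti P_ex; apply: NNPP => no_c.
have bound (s : seq T) : exists B, forall c, c \in s -> ~ P c B.
  elim: s => [|c s [B B_ok]]; first by exists 0.
  have [Mc Mc_ok] : exists Mc, ~ P c Mc.
    by apply: not_all_ex_not => Pc; apply: no_c; exists c.
  exists (maxn B Mc) => c'; rewrite in_cons => /orP[/eqP-> | c's] Pc'.
    by apply: Mc_ok; apply: P_anti Pc'; rewrite leq_maxr.
  by apply: (B_ok c' c's); apply: P_anti Pc'; rewrite leq_maxl.
have [B B_ok] := bound (enum T); have [c Pc] := P_ex B.
by apply: (B_ok c); rewrite ?mem_enum.
Qed.

Lemma iter_periodic_of_preimages (T : finType) (f : T -> T) (P : T -> Prop) a :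
  (forall x, P x -> exists2 c, P c & f c = x) -> P a ->
  exists2 d, 0 < d & iter d f a = a.
Proof.
move=> P_pre Pa; pose g x := epsilon (inhabits a) (fun c => P c /\ f c = x).
have gP x : P x -> P (g x) /\ f (g x) = x.
  case/P_pre => c Pc fc.
  by apply: (epsilon_spec _ (fun c => P c /\ f c = x)); exists c.
have iter_gP k : P (iter k g a) by elim: k => //= k /gP[].
have f_g k : iter k f (iter k g a) = a.
  by elim: k => // k IH; rewrite [iter k.+1 f _]iterSr (gP _ (iter_gP k)).2.
(* The g-orbit of a loops back; pushing the loop forward by f closes an f-cycle at a. *)
have /trajectP[i i_lt gi] := looping_order g a; set n := order g a in i_lt gi *.
exists (n - i); first by rewrite subn_gt0.
by rewrite -[in LHS](f_g i) -iterD (subnK (ltnW i_lt)) -gi f_g.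
Qed.

Lemma fcycle_traject (T : eqType) (f : T -> T) x d :
  iter d f x = x -> fcycle f (traject f x d).
Proof.
case: d => // d fx /=; rewrite -[x in rcons _ x]fx iterSr -trajectSr.
exact: fpath_traject.
Qed.

Lemma fcycle_iter_reach (T : finType) (f : T -> T) (s : seq T) a b N :
  fcycle f s -> a \in s -> b \in s -> exists2 K, N <= K & iter K f b = a.
Proof.
move=> f_s a_s b_s.
have ba : fconnect f b a by rewrite fconnect_orbit (in_orbit_cycle f_s b_s a_s).
exists (findex f b a + N * order f b).
  by rewrite (leq_trans _ (leq_addl _ _)) // leq_pmulr // order_gt0.
by rewrite iterD iterM (iter_fix _ (iter_order_cycle f_s b_s b_s)) iter_findex.
Qed.

Lemma prefix_add (A : finType) (u : nat -> A) i n :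
  prefix u (i + n) = prefix u i ++ factor u i n.
Proof.
rewrite /prefix /factor /mkseq iotaD map_cat; congr (_ ++ _).
by rewrite add0n -[in LHS](addn0 i) iotaDl -map_comp.
Qed.

Section Substitution.
Variables (A : finType) (tau : A -> seq A).

Lemma subw_cat w1 w2 : subw tau (w1 ++ w2) = subw tau w1 ++ subw tau w2.
Proof. by rewrite /subw map_cat flatten_cat. Qed.

Lemma iter_subw_cat k w1 w2 :
  iter k (subw tau) (w1 ++ w2) = iter k (subw tau) w1 ++ iter k (subw tau) w2.
Proof. by elim: k => //= k ->; rewrite subw_cat. Qed.

Hypothesis tau_ne : nonerasing tau.

Lemma size_subw w : size w <= size (subw tau w).
Proof. by elim: w => //= x w IH; rewrite /subw /= size_cat -add1n leq_add. Qed.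

Lemma iter_subw_last k b :
  exists s, iter k (subw tau) [:: b] = rcons s (iter k (last_letter tau) b).
Proof.
elim: k => [|k [s hs]]; first by exists [::].
rewrite /= hs -cats1 subw_cat {2}/subw /= cats0.
have := tau_ne (iter k (last_letter tau) b); rewrite /last_letter.
case: (tau _) => [|y t] // _.
by exists (subw tau s ++ belast y t); rewrite rcons_cat /= -lastI.
Qed.

End Substitution.

Section CuttingPoints.
Variables (A : finType) (tau : A -> seq A) (u : nat -> A).
Hypothesis tau_ne : nonerasing tau.

Definition cut_point p := size (subw tau (prefix u p)).

Lemma subw_prefix_add q n :
  subw tau (prefix u (q + n)) = subw tau (prefix u q) ++ subw tau (factor u q n).
Proof. by rewrite prefix_add subw_cat. Qed.

Lemma cut_pointS p : cut_point p.+1 = cut_point p + size (tau (u p)).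
Proof. by rewrite /cut_point -addn1 subw_prefix_add size_cat /subw /= addn0 cats0. Qed.

Lemma leq_cut_point : {mono cut_point : p q / p <= q}.
Proof.
apply: leq_mono; apply: homo_ltn => [y x z|p]; first exact: ltn_trans.
by rewrite cut_pointS -[X in X < _]addn0 ltn_add2l tau_ne.
Qed.

Lemma ltn_cut_point : {mono cut_point : p q / p < q}.
Proof. exact: leqW_mono leq_cut_point. Qed.

Lemma leq_cut_point_id p : p <= cut_point p.
Proof. by rewrite -[X in X <= _](size_mkseq u) size_subw. Qed.

Lemma cut_pointS_leq_inE m e :
  inE tau u e -> cut_point m < e -> cut_point m.+1 <= e.
Proof. by case=> r ->; rewrite -[size _]/(cut_point r) ltn_cut_point leq_cut_point. Qed.

Lemma nth_subw_prefix x0 q r k : k < cut_point q -> k < cut_point r ->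
  nth x0 (subw tau (prefix u q)) k = nth x0 (subw tau (prefix u r)) k.
Proof.
wlog le_qr : q r / q <= r => [wlog_le|kq _].
  by case: (leqP q r) => [|/ltnW] /wlog_le hle kq kr; [|symmetry]; apply: hle.
by rewrite -(subnKC le_qr) subw_prefix_add nth_cat kq.
Qed.

Hypothesis u_fix : fixed_point tau u.

Lemma subw_prefix p : subw tau (prefix u p) = prefix u (cut_point p).
Proof.
apply: (@eq_from_nth _ (u 0)); first by rewrite size_mkseq.
move=> k kp; rewrite nth_mkseq // -(u_fix k); apply: nth_subw_prefix => //.
exact: leq_cut_point_id.
Qed.

Lemma nth_tau_u x0 q k :
  k < size (tau (u q)) -> nth x0 (tau (u q)) k = u (cut_point q + k).
Proof.
move=> k_lt; have := subw_prefix q.+1.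
rewrite -addn1 subw_prefix_add {2}/subw /= addn0 cats0 subw_prefix.
move/(congr1 (nth x0 ^~ (cut_point q + k))).
rewrite nth_cat size_mkseq ltnNge leq_addr addKn /= => ->.
by rewrite nth_mkseq // addn1 cut_pointS ltn_add2l.
Qed.

Lemma last_letter_u p : last_letter tau (u p) = u (cut_point p.+1).-1.
Proof.
rewrite /last_letter -nth_last nth_tau_u ?prednK ?tau_ne //.
by rewrite cut_pointS -(prednK (tau_ne (u p))) addnS.
Qed.

Lemma subw_factor i n :
  subw tau (factor u i n) = factor u (cut_point i) (size (subw tau (factor u i n))).
Proof.
have := subw_prefix (i + n).
rewrite /cut_point !subw_prefix_add size_cat prefix_add -/(cut_point i) subw_prefix.
by move/(congr1 (drop (cut_point i))); rewrite !drop_size_cat ?size_mkseq.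
Qed.

Definition occurs (w : seq A) := exists i, w = factor u i (size w).

Lemma occurs_iter_subw k w : occurs w -> occurs (iter k (subw tau) w).
Proof.
move=> w_occ; elim: k => //= k [i ->].
by exists (cut_point i); rewrite -subw_factor.
Qed.

Section Desubstitution.
Variables (L j M : nat).
Hypothesis recognizable_L :
  forall i i', factor u i L = factor u i' L -> inE tau u i -> inE tau u i'.
Hypothesis shifted_prefix : forall k, k < cut_point M + L -> u (j + k) = u k.

Lemma inE_shift z : z <= cut_point M -> inE tau u (j + z) <-> inE tau u z.
Proof.
move=> zM; have eq_factor : factor u (j + z) L = factor u z L.
  apply/eq_in_map => k; rewrite mem_iota => /andP[_ kL].
  by rewrite -addnA shifted_prefix // -addnS leq_add.
by split; apply: recognizable_L.
Qed.

Lemma cut_point_shift p q :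
  cut_point p = j -> q <= M -> cut_point (p + q) = j + cut_point q.
Proof.
move=> pj; elim: q => [_|q IH qM]; first by rewrite !addn0.
have {}IH := IH (ltnW qM); rewrite addnS.
set x := cut_point q.+1; set y := cut_point (p + q).+1.
have xM : x <= cut_point M by rewrite leq_cut_point.
have y_le : y <= j + x.
  apply: cut_pointS_leq_inE; first by apply/(inE_shift xM); exists q.+1.
  by rewrite IH ltn_add2l ltn_cut_point.
have jy : j <= y by rewrite -pj leq_cut_point ltnW // ltnS leq_addr.
have x_le : x <= y - j.
  apply: cut_pointS_leq_inE; last by rewrite ltn_subRL -IH ltn_cut_point.
  have y_jM : y - j <= cut_point M by rewrite leq_subLR (leq_trans y_le) ?leq_add2l.
  by apply/(inE_shift y_jM); rewrite subnKC //; exists (p + q).+1.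
by apply/eqP; rewrite eqn_leq y_le -(leq_subRL _ jy) x_le.
Qed.

Lemma u_shift p q : injective tau -> cut_point p = j -> q < M -> u (p + q) = u q.
Proof.
move=> tau_inj pj qM; apply: tau_inj.
have size_eq : size (tau (u (p + q))) = size (tau (u q)).
  have := cut_pointS (p + q); rewrite -addnS !cut_point_shift ?(ltnW qM) //.
  by rewrite cut_pointS addnA => /addnI.
apply: (@eq_from_nth _ (u 0)) => // k k_lt.
rewrite !nth_tau_u -?size_eq // cut_point_shift ?(ltnW qM) // -addnA shifted_prefix //.
apply: ltn_addr; apply: leq_trans (_ : cut_point q.+1 <= cut_point M).
  by rewrite cut_pointS ltn_add2l -size_eq.
by rewrite leq_cut_point.
Qed.

End Desubstitution.

Lemma inX_cons_desubst a M : unil_recognizable tau u -> injective tau ->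
  inX u (cons_seq a u) ->
  exists c, last_letter tau c = a /\
    exists n, forall i, i < M -> u (n + i) = cons_seq c u i.
Proof.
move=> [L recL] tau_inj aX; have [n an] := aX (cut_point M + L).+1.
have shifted k : k < cut_point M + L -> u (n.+1 + k) = u k.
  by move=> kML; rewrite addSnnS an.
have := (inE_shift recL shifted (leq0n _)).2 (ex_intro _ 0 erefl).
rewrite addn0 => -[[|p] // jp]; exists (u p); split.
  by rewrite last_letter_u /cut_point -jp -[n]addn0 an.
exists p => -[|i] iM; first by rewrite addn0.
by rewrite addnS -addSn (u_shift recL shifted tau_inj (esym jp)) // ltnW.
Qed.

Lemma inX_cons_last_letter a : unil_recognizable tau u -> injective tau ->
  inX u (cons_seq a u) -> exists2 c, inX u (cons_seq c u) & last_letter tau c = a.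
Proof.
move=> recog tau_inj aX.
pose P c M := last_letter tau c = a /\
  exists n, forall i, i < M -> u (n + i) = cons_seq c u i.
have [|c Pc] :=
  @exists_forall_antitone _ P _ (fun M => inX_cons_desubst M recog tau_inj aX).
  by move=> c M N NM [ca [n cn]]; split=> //; exists n => i iN; apply/cn/(leq_trans iN).
by exists c => [M|]; [case: (Pc M) | case: (Pc 0)].
Qed.

Lemma size_tau_u0_gt1 : primitive tau -> X_infinite u -> 1 < size (tau (u 0)).
Proof.
move=> [n [_ tau_prim]] X_inf; rewrite ltnNge; apply: contra_notN X_inf => size_le1.
have tau_u0 : tau (u 0) = [:: u 0].
  have := u_fix 0; rewrite /subst_inf /subw /= cats0.
  by case: (tau (u 0)) (tau_ne (u 0)) size_le1 => [|x [|y t]] //= _ _ ->.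
have pow_u0 k : subst_pow tau k (u 0) = [:: u 0].
  by elim: k => //= k; rewrite /subst_pow => ->; rewrite /subw /= cats0 tau_u0.
have all_u0 x : x = u 0 by apply/eqP; rewrite -mem_seq1 -(pow_u0 n) tau_prim.
by exists [:: u] => x _; exists 0 => // i; rewrite [LHS]all_u0 [RHS]all_u0.
Qed.

Hypothesis tau_u0_gt1 : 1 < size (tau (u 0)).

Lemma ltn_id_cut_point m : 0 < m -> m < cut_point m.
Proof.
elim: m => // [[_ _|m IH _]]; first by rewrite cut_pointS.
by apply: leq_ltn_trans (IH _) _; rewrite ?ltn_cut_point.
Qed.

Lemma iter_subw_u0 k : exists2 m, k < m & iter k (subw tau) [:: u 0] = prefix u m.
Proof.
elim: k => [|k [m km u0_m]]; first by exists 1.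
exists (cut_point m); last by rewrite /= u0_m subw_prefix.
exact: leq_ltn_trans km (ltn_id_cut_point (leq_ltn_trans (leq0n k) km)).
Qed.

Lemma occurs_cons_iter_last b K : occurs [:: b; u 0] ->
  exists n, forall t, t <= K -> u (n + t) = cons_seq (iter K (last_letter tau) b) u t.
Proof.
move=> bu0_occ; have [s0 s0_def] := iter_subw_last tau_ne K b.
have [m Km u0_m] := iter_subw_u0 K.
have := occurs_iter_subw K bu0_occ.
rewrite -cat1s iter_subw_cat s0_def u0_m => -[i occ_i].
exists (i + size s0) => t tK; have := congr1 (nth (u 0) ^~ (size s0 + t)) occ_i.
rewrite -cats1 -catA nth_cat ltnNge leq_addr addKn /= nth_mkseq; last first.
  by rewrite size_cat /= size_mkseq ltn_add2l ltnS (leq_trans tK (ltnW Km)).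
rewrite -addnA => <-; case: t tK => [|t] tK //=.
by rewrite nth_mkseq // (ltn_trans tK Km).
Qed.

End CuttingPoints.

Theorem proposition4 (A : finType) (tau : A -> seq A) (u : nat -> A) :
  nonerasing tau ->
  primitive tau ->
  X_infinite u ->
  unil_recognizable tau u ->
  powers_injective tau ->
  generating tau u ->
  forall a : A,
    inX u (cons_seq a u) <->
    exists s : seq A,
      [/\ suffix_cycle tau s, a \in s & exists2 b, b \in s & inL tau [:: b; u 0]].
Proof.
move=> tau_ne tau_prim X_inf recog pow_inj [u_fix u_gen] a.
have tau_inj : injective tau.
  by move=> x y e; apply: (pow_inj 1) => //; rewrite /subst_pow /= /subw /= e.
split=> [aX | [s [[_ s_cyc] a_s [b b_s bu0]]]].
  have [d d_gt0 fd] := iter_periodic_of_preimages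
    (fun x => inX_cons_last_letter tau_ne u_fix recog tau_inj (a := x)) aX.
  exists (traject (last_letter tau) a d); split.
  - by split; [rewrite -size_eq0 size_traject -lt0n | exact: fcycle_traject].
  - by apply/trajectP; exists 0.
  exists a; first by apply/trajectP; exists 0.
  by apply/u_gen; have [n an] := aX 2; exists n; rewrite /factor /mkseq /= !an.
move=> N; have [K NK <-] := fcycle_iter_reach N s_cyc a_s b_s.
have tau_u0_gt1 := size_tau_u0_gt1 tau_ne u_fix tau_prim X_inf.
have [n Kn] := occurs_cons_iter_last tau_ne u_fix tau_u0_gt1 K ((u_gen _).2 bu0).
by exists n => i iN; apply/Kn/(leq_trans (ltnW iN) NK).
Qed.
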